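(* Let $T>0$ and let $(S(s,t,\cdot))_{0\le s\le t\le T}$ be a family of maps from $\bar\Gamma$ into itself such that: (1) (translation invariance) $S(s,t,f+c)=S(s,t,f)+c$ for all $f\in\bar\Gamma$, $c\in\mathbb{R}$, $s\le t$; (2) (monotonicity) $f\le g$ implies $S(s,t,f)\le S(s,t,g)$ for all $s\le t$, $f,g\in\bar\Gamma$; (3) (locality) there is $\alpha>1$ such that for all $f,g\in\bar\Gamma$, $s\le t$, $x\in\mathbb{R}^2$, $R\ge0$: $\sup_{z\in\mathcal{B}(x,R)}|S(s,t,f)(z)-S(s,t,g)(z)|\le\sup_{z\in\mathcal{B}(x,R+\alpha(t-s))}|f(z)-g(z)|$, where $\mathcal{B}(x,r)$ is the closed ball of center $x$ and radius $r$ for the supremum norm on $\mathbb{R}^2$; (4) (semi-group) $S(r,t,f)=S(s,t,S(r,s,f))$ for all $r\le s\le t$ and $S(t,t,f)=f$, for all $f\in\bar\Gamma$; (5) (compatibility with linear solutions) for every $\rho\in\mathbb{R}\times[-1,0]$, with $f_\rho(x)=\rho\cdot x$, and all $s\le t$, $S(s,t,f_\rho)=f_\rho+v(\rho)(t-s)$. Then for any $f\in\bar\Gamma$, if $(x,t)\mapsto S(0,t,f)(x)$ is continuous on $\mathbb{R}^2\times[0,T]$, it is a viscosity solution of $\partial_t u=v(\nabla u)$, $u(\cdot,0)=f$, on $\mathbb{R}^2\times[0,T]$.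
   Context: $\bar\Gamma$ is the set of continuous $f:\mathbb{R}^2\to\mathbb{R}$ with $f(x,y_2)-f(x,y_1)\in[-(y_2-y_1),0]$ for all $x\in\mathbb{R}$ and $y_1\le y_2$. $v(\rho_1,\rho_2)=\frac1\pi\sqrt{\pi^2\rho_1^2+4\sin^2(\pi\rho_2)}$. A viscosity solution of $\partial_tu=v(\nabla u)$, $u(\cdot,0)=f$ on $\mathbb{R}^2\times[0,T]$ is a continuous $u$ with $u(\cdot,0)=f$ such that for every $\phi\in C^\infty(\mathbb{R}^2\times(0,T))$ and $(x_0,t_0)\in\mathbb{R}^2\times(0,T)$ with $\phi(x_0,t_0)=u(x_0,t_0)$: if $\phi\ge u$ on a neighbourhood of $(x_0,t_0)$ then $\partial_t\phi(x_0,t_0)\le v(\nabla\phi(x_0,t_0))$ (subsolution), and if $\phi\le u$ on a neighbourhood of $(x_0,t_0)$ then $\partial_t\phi(x_0,t_0)\ge v(\nabla\phi(x_0,t_0))$ (supersolution). *)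

From Stdlib Require Import Reals Lra.
From Coquelicot Require Import Coquelicot.
Open Scope R_scope.

Definition dinf (x z : R * R) : R :=
  Rmax (Rabs (fst z - fst x)) (Rabs (snd z - snd x)).

Definition ballinf (x : R * R) (r : R) (z : R * R) : Prop := dinf x z <= r.

Definition Gamma_bar (f : R * R -> R) : Prop :=
  (forall p : R * R, continuous f p) /\
  (forall x y1 y2 : R, y1 <= y2 ->
     - (y2 - y1) <= f (x, y2) - f (x, y1) <= 0).

Definition vel (rho : R * R) : R :=
  / PI * sqrt (PI ^ 2 * (fst rho) ^ 2 + 4 * (sin (PI * snd rho)) ^ 2).

Definition flin (rho : R * R) (x : R * R) : R :=
  fst rho * fst x + snd rho * snd x.

Definition open_dom (T : R) (x : R * R) (t : R) : Prop := 0 < t < T.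
Definition closed_dom (T : R) (x : R * R) (t : R) : Prop := 0 <= t <= T.

Definition cont_on (D : R * R -> R -> Prop) (u : R * R -> R -> R) : Prop :=
  forall x t, D x t -> forall eps, 0 < eps -> exists delta, 0 < delta /\
    forall y s, D y s -> dinf x y < delta -> Rabs (s - t) < delta ->
      Rabs (u y s - u x t) < eps.

Definition d_x1 (g : R * R -> R -> R) : R * R -> R -> R :=
  fun x t => Derive (fun y => g (y, snd x) t) (fst x).
Definition d_x2 (g : R * R -> R -> R) : R * R -> R -> R :=
  fun x t => Derive (fun y => g (fst x, y) t) (snd x).
Definition d_t (g : R * R -> R -> R) : R * R -> R -> R :=
  fun x t => Derive (fun s => g x s) t.

Definition cont_at (g : R * R -> R -> R) (x : R * R) (t : R) : Prop :=
  continuous (fun p : (R * R) * R => g (fst p) (snd p)) (x, t).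

Fixpoint Ck (k : nat) (U : R * R -> R -> Prop) (g : R * R -> R -> R) : Prop :=
  match k with
  | O => forall x t, U x t -> cont_at g x t
  | S k' =>
      (forall x t, U x t -> cont_at g x t) /\
      (forall x t, U x t ->
         ex_derive (fun y => g (y, snd x) t) (fst x) /\
         ex_derive (fun y => g (fst x, y) t) (snd x) /\
         ex_derive (fun s => g x s) t) /\
      Ck k' U (d_x1 g) /\ Ck k' U (d_x2 g) /\ Ck k' U (d_t g)
  end.

Definition Cinf (U : R * R -> R -> Prop) (g : R * R -> R -> R) : Prop :=
  forall k, Ck k U g.

Definition viscosity_solution (T : R) (f : R * R -> R) (u : R * R -> R -> R) : Prop :=
  cont_on (closed_dom T) u /\
  (forall x, u x 0 = f x) /\
  (forall (phi : R * R -> R -> R) (x0 : R * R) (t0 : R),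
     Cinf (open_dom T) phi -> open_dom T x0 t0 -> phi x0 t0 = u x0 t0 ->
     ((exists delta, 0 < delta /\ forall y s, open_dom T y s ->
         dinf x0 y < delta -> Rabs (s - t0) < delta -> u y s <= phi y s) ->
      d_t phi x0 t0 <= vel (d_x1 phi x0 t0, d_x2 phi x0 t0)) /\
     ((exists delta, 0 < delta /\ forall y s, open_dom T y s ->
         dinf x0 y < delta -> Rabs (s - t0) < delta -> phi y s <= u y s) ->
      vel (d_x1 phi x0 t0, d_x2 phi x0 t0) <= d_t phi x0 t0)).

(* Let phi touch u(x,t) := S(0,t,f)(x) from above at (x,t), with spatial gradient p and time
   derivative a. Since u(x1,.,t) has slopes in [-1,0] and touches phi(x1,.,t) from below, p2
   lies in [-1,0], so f_p is an admissible datum. For small h > 0, the first-order expansion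
   of phi puts u(.,t-h) below the affine function L = f_p + c, c = phi(x,t) - p.x - a h + eps h,
   on the ball of radius alpha h around x. By the semigroup property and monotonicity,
   u(x,t) = S(t-h,t,u(.,t-h))(x) <= S(t-h,t,max(u(.,t-h),L))(x); by locality the latter equals
   S(t-h,t,L)(x) = p.x + c + v(p) h. Hence a <= v(p) + eps. Supersolutions are handled the same
   way with min in place of max. *)
From Stdlib Require Import Reals Lra.
From Coquelicot Require Import Coquelicot.
Open Scope R_scope.

Definition grad_x (phi : R * R -> R -> R) (x : R * R) (t : R) : R * R :=
  (d_x1 phi x t, d_x2 phi x t).

Definition nonincreasing_1lip (w : R -> R) : Prop :=
  forall y1 y2, y1 <= y2 -> - (y2 - y1) <= w y2 - w y1 <= 0.

Lemma continuous_Rmax {U : UniformSpace} (f g : U -> R) (x : U) :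
  continuous f x -> continuous g x -> continuous (fun y => Rmax (f y) (g y)) x.
Proof.
  intros Hf Hg.
  apply (continuous_ext (fun y => (f y + g y + Rabs (f y - g y)) * / 2)).
  { intro y. unfold Rmax. destruct Rle_dec; split_Rabs; lra. }
  apply (continuous_mult (fun y => f y + g y + Rabs (f y - g y)) (fun _ => / 2));
    [| apply continuous_const].
  apply (continuous_plus (fun y => f y + g y)); [apply (continuous_plus f g); assumption |].
  apply (continuous_comp (fun y => f y - g y) Rabs);
    [apply (continuous_minus f g); assumption | apply continuous_Rabs].
Qed.

Lemma continuous_Rmin {U : UniformSpace} (f g : U -> R) (x : U) :
  continuous f x -> continuous g x -> continuous (fun y => Rmin (f y) (g y)) x.
Proof.
  intros Hf Hg.
  apply (continuous_ext (fun y => - Rmax (- f y) (- g y))).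
  { intro y. rewrite <- Rmin_opp_Rmax, !Ropp_involutive. reflexivity. }
  apply (continuous_opp (K := R_AbsRing) (V := R_NormedModule) (fun y => Rmax (- f y) (- g y))).
  apply continuous_Rmax; apply (continuous_opp (K := R_AbsRing) (V := R_NormedModule)); assumption.
Qed.

Lemma is_derive_ge_of_right_increments (g : R -> R) (y d m delta : R) :
  is_derive g y d -> 0 < delta ->
  (forall h, 0 < h < delta -> m * h <= g (y + h) - g y) -> m <= d.
Proof.
  intros Hd Hdelta Hinc. apply Rnot_lt_le. intro Hlt.
  apply is_derive_Reals in Hd.
  destruct (Hd ((m - d) / 2) ltac:(lra)) as [e He].
  assert (He0 := cond_pos e).
  set (h := Rmin delta e / 2).
  assert (Hh : 0 < h /\ h < delta /\ h < e).
  { assert (Rmin delta e <= delta) by apply Rmin_l.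
    assert (Rmin delta e <= e) by apply Rmin_r.
    assert (0 < Rmin delta e) by (apply Rmin_pos; lra).
    unfold h; lra. }
  assert (Hq := He h ltac:(lra) ltac:(rewrite Rabs_pos_eq; lra)).
  assert (Hm : m <= (g (y + h) - g y) / h) by (apply Rle_div_r, Hinc; lra).
  apply Rabs_def2 in Hq. lra.
Qed.

Lemma is_derive_reflect (g : R -> R) (y d : R) :
  is_derive g y d -> is_derive (fun z => g (2 * y - z)) y (- d).
Proof.
  intro Hd.
  assert (Hr : is_derive (fun z => 2 * y - z) y (-1)) by (auto_derive; [exact I | ring]).
  assert (Hg : is_derive g (2 * y - y) d) by (replace (2 * y - y) with y by ring; exact Hd).
  assert (H := is_derive_comp g (fun z => 2 * y - z) y d (-1) Hg Hr).
  replace (- d) with (scal (-1) d) by (unfold scal; simpl; unfold mult; simpl; ring).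
  exact H.
Qed.

Lemma slope_range_of_touch_above (g w : R -> R) (y d delta : R) :
  is_derive g y d -> 0 < delta -> nonincreasing_1lip w ->
  (forall z, Rabs (z - y) < delta -> w z - w y <= g z - g y) -> -1 <= d <= 0.
Proof.
  intros Hd Hdelta Hw Htouch. split.
  - apply (is_derive_ge_of_right_increments g y d (-1) delta Hd Hdelta).
    intros h Hh.
    assert (Hwh := Hw y (y + h) ltac:(lra)).
    assert (Hgh := Htouch (y + h)
      ltac:(replace (y + h - y) with h by ring; rewrite Rabs_pos_eq; lra)).
    lra.
  - cut (0 <= - d); [lra |].
    apply (is_derive_ge_of_right_increments _ y (- d) 0 delta (is_derive_reflect g y d Hd) Hdelta).
    intros h Hh. cbv beta.
    replace (2 * y - (y + h)) with (y - h) by ring. replace (2 * y - y) with y by ring.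
    assert (Hwh := Hw (y - h) y ltac:(lra)).
    assert (Hgh := Htouch (y - h)
      ltac:(replace (y - h - y) with (- h) by ring; rewrite Rabs_Ropp, Rabs_pos_eq; lra)).
    lra.
Qed.

Lemma slope_range_of_touch_below (g w : R -> R) (y d delta : R) :
  is_derive g y d -> 0 < delta -> nonincreasing_1lip w ->
  (forall z, Rabs (z - y) < delta -> g z - g y <= w z - w y) -> -1 <= d <= 0.
Proof.
  intros Hd Hdelta Hw Htouch.
  (* The point reflection (z, w) |-> (2y - z, -w) preserves the slope class and swaps the
     side from which g touches w. *)
  apply (slope_range_of_touch_above (fun z => - g (2 * y - z)) (fun z => - w (2 * y - z))
           y d delta); [| exact Hdelta | |].
  - assert (H := is_derive_opp _ _ _ (is_derive_reflect g y d Hd)).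
    change (opp (- d)) with (- - d) in H. rewrite Ropp_involutive in H. exact H.
  - intros y1 y2 Hy. assert (H := Hw (2 * y - y2) (2 * y - y1) ltac:(lra)). lra.
  - intros z Hz. replace (2 * y - y) with y by ring.
    assert (H := Htouch (2 * y - z)
      ltac:(replace (2 * y - z - y) with (- (z - y)) by ring; rewrite Rabs_Ropp; exact Hz)).
    lra.
Qed.

Lemma MVT_affine_bound (g dg : R -> R) (a b k eta : R) :
  (forall c, Rabs (c - a) <= Rabs (b - a) -> is_derive g c (dg c)) ->
  (forall c, Rabs (c - a) <= Rabs (b - a) -> Rabs (dg c - k) <= eta) ->
  Rabs (g b - g a - k * (b - a)) <= eta * Rabs (b - a).
Proof.
  intros Hd Hb.
  assert (Hin : forall c, Rmin a b <= c <= Rmax a b -> Rabs (c - a) <= Rabs (b - a)).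
  { intros c Hc. apply Rabs_le_between_min_max. rewrite Rmin_comm, Rmax_comm. exact Hc. }
  destruct (MVT_gen g a b dg) as [c [Hc Heq]].
  - intros x Hx. apply Hd, Hin. lra.
  - intros x Hx. apply continuity_pt_filterlim.
    apply (ex_derive_continuous (K := R_AbsRing) (V := R_NormedModule)).
    exists (dg x). apply Hd, Hin, Hx.
  - rewrite Heq. replace (dg c * (b - a) - k * (b - a)) with ((dg c - k) * (b - a)) by ring.
    rewrite Rabs_mult. apply Rmult_le_compat_r; [apply Rabs_pos | apply Hb, Hin, Hc].
Qed.

Lemma dinf_lt_iff (x y : R * R) (r : R) :
  dinf x y < r <-> Rabs (fst y - fst x) < r /\ Rabs (snd y - snd x) < r.
Proof. apply Rmax_Rlt. Qed.

Lemma dinf_vertical (x : R * R) (z : R) : dinf x (fst x, z) = Rabs (z - snd x).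
Proof.
  unfold dinf; simpl. rewrite Rminus_eq_0, Rabs_R0.
  apply Rmax_right, Rabs_pos.
Qed.

Lemma cont_at_eps (g : R * R -> R -> R) (x : R * R) (t eps : R) :
  cont_at g x t -> 0 < eps -> exists delta, 0 < delta /\
    forall y s, dinf x y < delta -> Rabs (s - t) < delta -> Rabs (g y s - g x t) < eps.
Proof.
  intros H Heps.
  destruct (proj1 (filterlim_locally _ _) H (mkposreal eps Heps)) as [d Hd].
  exists d. split; [apply cond_pos |].
  intros y s Hy Hs. apply dinf_lt_iff in Hy.
  apply (Hd (y, s)). split; [split |]; tauto.
Qed.

Lemma C1_partials_near (T : R) (phi : R * R -> R -> R) (x : R * R) (t eta : R) :
  Ck 1 (open_dom T) phi -> 0 < t < T -> 0 < eta ->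
  exists rho, 0 < rho /\ forall z s, dinf x z < rho -> Rabs (s - t) < rho ->
    open_dom T z s /\ Rabs (d_x1 phi z s - d_x1 phi x t) < eta /\
    Rabs (d_x2 phi z s - d_x2 phi x t) < eta /\ Rabs (d_t phi z s - d_t phi x t) < eta.
Proof.
  intros [_ [_ [H1 [H2 H3]]]] Ht Heta.
  destruct (cont_at_eps _ _ _ eta (H1 x t Ht) Heta) as [d1 [Hd1 K1]].
  destruct (cont_at_eps _ _ _ eta (H2 x t Ht) Heta) as [d2 [Hd2 K2]].
  destruct (cont_at_eps _ _ _ eta (H3 x t Ht) Heta) as [d3 [Hd3 K3]].
  set (rho := Rmin d1 (Rmin d2 (Rmin d3 (Rmin t (T - t))))).
  assert (Hrho : rho <= d1 /\ rho <= d2 /\ rho <= d3 /\ rho <= t /\ rho <= T - t).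
  { unfold rho. repeat split;
      repeat (apply Rmin_l || (eapply Rle_trans; [apply Rmin_r |])); apply Rle_refl. }
  exists rho. split; [unfold rho; repeat apply Rmin_pos; lra |].
  intros z s Hz Hs. unfold open_dom.
  repeat split; [split_Rabs; lra .. | apply K1 | apply K2 | apply K3]; lra.
Qed.

Lemma C1_first_order_bound (T : R) (phi : R * R -> R -> R) (x : R * R) (t eta : R) :
  Ck 1 (open_dom T) phi -> 0 < t < T -> 0 < eta ->
  exists rho, 0 < rho /\ forall z s, dinf x z < rho -> Rabs (t - s) < rho ->
    Rabs (phi z s - (phi x t + flin (grad_x phi x t) z - flin (grad_x phi x t) x
                     - d_t phi x t * (t - s)))
    <= eta * (2 * dinf x z + Rabs (t - s)).
Proof.
  intros Hphi Ht Heta.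
  pose proof (proj1 (proj2 Hphi)) as Hder.
  destruct (C1_partials_near T phi x t eta Hphi Ht Heta) as [rho [Hrho Hnear]].
  exists rho. split; [exact Hrho |].
  intros [z1 z2] s Hz Hs.
  destruct x as [x1 x2]. unfold grad_x, flin; cbn [fst snd].
  assert (Hd1z : Rabs (z1 - x1) <= dinf (x1, x2) (z1, z2)) by apply Rmax_l.
  assert (Hd2z : Rabs (z2 - x2) <= dinf (x1, x2) (z1, z2)) by apply Rmax_r.
  rewrite (Rabs_minus_sym t s) in Hs |- *.
  assert (Et : Rabs (phi (z1, z2) s - phi (z1, z2) t - d_t phi (x1, x2) t * (s - t))
               <= eta * Rabs (s - t)).
  { apply (MVT_affine_bound (fun r => phi (z1, z2) r) (fun r => d_t phi (z1, z2) r));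
      intros c Hc; destruct (Hnear (z1, z2) c Hz ltac:(lra)) as [Hdom [_ [_ K]]].
    - apply Derive_correct, (Hder (z1, z2) c Hdom).
    - left. exact K. }
  assert (E2 : Rabs (phi (z1, z2) t - phi (z1, x2) t - d_x2 phi (x1, x2) t * (z2 - x2))
               <= eta * Rabs (z2 - x2)).
  { apply (MVT_affine_bound (fun y => phi (z1, y) t) (fun y => d_x2 phi (z1, y) t));
      intros c Hc; destruct (Hnear (z1, c) t ltac:(apply dinf_lt_iff; simpl; lra)
                               ltac:(rewrite Rminus_eq_0, Rabs_R0; lra)) as [Hdom [_ [K _]]].
    - apply Derive_correct, (Hder (z1, c) t Hdom).
    - left. exact K. }
  assert (E1 : Rabs (phi (z1, x2) t - phi (x1, x2) t - d_x1 phi (x1, x2) t * (z1 - x1))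
               <= eta * Rabs (z1 - x1)).
  { apply (MVT_affine_bound (fun y => phi (y, x2) t) (fun y => d_x1 phi (y, x2) t));
      intros c Hc; destruct (Hnear (c, x2) t
                               ltac:(apply dinf_lt_iff; simpl; rewrite Rminus_eq_0, Rabs_R0; lra)
                               ltac:(rewrite Rminus_eq_0, Rabs_R0; lra)) as [Hdom [K _]].
    - apply Derive_correct, (Hder (c, x2) t Hdom).
    - left. exact K. }
  match goal with |- Rabs ?e <= _ =>
    replace e with ((phi (z1, z2) s - phi (z1, z2) t - d_t phi (x1, x2) t * (s - t))
                    + (phi (z1, z2) t - phi (z1, x2) t - d_x2 phi (x1, x2) t * (z2 - x2))
                    + (phi (z1, x2) t - phi (x1, x2) t - d_x1 phi (x1, x2) t * (z1 - x1)))
      by ring end.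
  eapply Rle_trans; [apply Rabs_triang |].
  eapply Rle_trans; [apply Rplus_le_compat_r, Rabs_triang |].
  nra.
Qed.

Lemma backward_affine_approx (T alpha delta eps : R) (phi : R * R -> R -> R) (x : R * R) (t : R) :
  Ck 1 (open_dom T) phi -> 0 < t < T -> 0 <= alpha -> 0 < delta -> 0 < eps ->
  exists h, 0 < h < t /\ h < delta /\ alpha * h < delta /\
    forall z, ballinf x (alpha * h) z ->
      Rabs (phi z (t - h) - (phi x t + flin (grad_x phi x t) z - flin (grad_x phi x t) x
                             - d_t phi x t * h)) <= eps * h.
Proof.
  intros Hphi Ht Halpha Hdelta Heps.
  set (K := 2 * alpha + 1).
  destruct (C1_first_order_bound T phi x t (eps / K) Hphi Ht
              ltac:(unfold K; apply Rdiv_lt_0_compat; lra)) as [rho [Hrho Hexp]].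
  set (m := Rmin rho (Rmin delta t)).
  assert (Hm : 0 < m /\ m <= rho /\ m <= delta /\ m <= t).
  { unfold m. repeat split; [repeat apply Rmin_pos; lra | ..];
      repeat (apply Rmin_l || (eapply Rle_trans; [apply Rmin_r |])); apply Rle_refl. }
  set (h := m / (alpha + 2)).
  assert (Hh : 0 < h) by (unfold h; apply Rdiv_lt_0_compat; lra).
  assert (Hhm : alpha * h + 2 * h = m) by (unfold h; field; lra).
  assert (Hah : 0 <= alpha * h) by (apply Rmult_le_pos; lra).
  exists h. repeat split; try lra.
  intros z Hz. unfold ballinf in Hz.
  assert (B := Hexp z (t - h) ltac:(lra)
                 ltac:(replace (t - (t - h)) with h by ring; rewrite Rabs_pos_eq; lra)).
  replace (t - (t - h)) with h in B by ring. rewrite (Rabs_pos_eq h) in B by lra.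
  eapply Rle_trans; [exact B |].
  apply Rle_trans with (eps / K * (K * h)).
  - apply Rmult_le_compat_l; [unfold K; apply Rlt_le, Rdiv_lt_0_compat; lra | unfold K; lra].
  - right. field. unfold K; lra.
Qed.

Lemma continuous_flin (p x : R * R) : continuous (flin p) x.
Proof.
  destruct x as [x1 x2]. unfold flin.
  apply (continuous_plus (fun y : R * R => fst p * fst y) (fun y => snd p * snd y)).
  - apply (continuous_mult (fun _ => fst p) (fun y : R * R => fst y));
      [apply continuous_const | apply continuous_fst].
  - apply (continuous_mult (fun _ => snd p) (fun y : R * R => snd y));
      [apply continuous_const | apply continuous_snd].
Qed.

Lemma Gamma_bar_flin (p : R * R) : -1 <= snd p <= 0 -> Gamma_bar (flin p).
Proof.
  intro Hp. split; [apply continuous_flin |].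
  intros x y1 y2 Hy. unfold flin; simpl. split; nra.
Qed.

Lemma Gamma_bar_translate (f : R * R -> R) (c : R) :
  Gamma_bar f -> Gamma_bar (fun y => f y + c).
Proof.
  intros [Hc Hm]. split.
  - intro q. apply (continuous_plus f (fun _ => c)); [apply Hc | apply continuous_const].
  - intros x y1 y2 Hy. specialize (Hm x y1 y2 Hy). lra.
Qed.

Lemma Gamma_bar_max (f g : R * R -> R) :
  Gamma_bar f -> Gamma_bar g -> Gamma_bar (fun y => Rmax (f y) (g y)).
Proof.
  intros [Cf Mf] [Cg Mg]. split.
  - intro q. apply continuous_Rmax; auto.
  - intros x y1 y2 Hy. specialize (Mf x y1 y2 Hy). specialize (Mg x y1 y2 Hy).
    unfold Rmax. repeat destruct Rle_dec; lra.
Qed.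

Lemma Gamma_bar_min (f g : R * R -> R) :
  Gamma_bar f -> Gamma_bar g -> Gamma_bar (fun y => Rmin (f y) (g y)).
Proof.
  intros [Cf Mf] [Cg Mg]. split.
  - intro q. apply continuous_Rmin; auto.
  - intros x y1 y2 Hy. specialize (Mf x y1 y2 Hy). specialize (Mg x y1 y2 Hy).
    unfold Rmin. repeat destruct Rle_dec; lra.
Qed.

Section MonotoneScheme.

Variables (T alpha : R) (S : R -> R -> (R * R -> R) -> (R * R -> R)).

Hypothesis S_Gamma_bar :
  forall s t f, 0 <= s <= t -> t <= T -> Gamma_bar f -> Gamma_bar (S s t f).
Hypothesis S_translate :
  forall s t f c, 0 <= s <= t -> t <= T -> Gamma_bar f ->
    forall z, S s t (fun y => f y + c) z = S s t f z + c.
Hypothesis S_monotone :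
  forall s t f g, 0 <= s <= t -> t <= T -> Gamma_bar f -> Gamma_bar g ->
    (forall z, f z <= g z) -> forall z, S s t f z <= S s t g z.
Hypothesis S_local :
  forall f g s t x Rad, Gamma_bar f -> Gamma_bar g -> 0 <= s <= t -> t <= T -> 0 <= Rad ->
    forall M,
      (forall z, ballinf x (Rad + alpha * (t - s)) z -> Rabs (f z - g z) <= M) ->
      (forall z, ballinf x Rad z -> Rabs (S s t f z - S s t g z) <= M).
Hypothesis S_semigroup :
  forall r s t f, 0 <= r <= s -> s <= t <= T -> Gamma_bar f ->
    forall z, S r t f z = S s t (S r s f) z.
Hypothesis S_linear :
  forall rho s t, -1 <= snd rho <= 0 -> 0 <= s <= t -> t <= T ->
    forall z, S s t (flin rho) z = flin rho z + vel rho * (t - s).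
Hypothesis alpha_ge0 : 0 <= alpha.

Lemma S_eq_of_eq_on_ball (g1 g2 : R * R -> R) (s t : R) (x : R * R) :
  Gamma_bar g1 -> Gamma_bar g2 -> 0 <= s <= t -> t <= T ->
  (forall z, ballinf x (alpha * (t - s)) z -> g1 z = g2 z) -> S s t g1 x = S s t g2 x.
Proof.
  intros H1 H2 Hs Ht Heq.
  assert (Hx : ballinf x 0 x).
  { unfold ballinf, dinf. rewrite !Rminus_eq_0, Rabs_R0, Rmax_left; lra. }
  assert (B : Rabs (S s t g1 x - S s t g2 x) <= 0).
  { apply (S_local g1 g2 s t x 0 H1 H2 Hs Ht (Rle_refl 0)); [| exact Hx].
    intros z Hz. rewrite Rplus_0_l in Hz. rewrite Heq, Rminus_eq_0, Rabs_R0 by exact Hz. lra. }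
  apply Rabs_le_between in B. lra.
Qed.

Lemma S_affine (s t c : R) (p x : R * R) :
  -1 <= snd p <= 0 -> 0 <= s <= t -> t <= T ->
  S s t (fun y => flin p y + c) x = flin p x + c + vel p * (t - s).
Proof.
  intros Hp Hs Ht.
  rewrite S_translate, S_linear by auto using Gamma_bar_flin. ring.
Qed.

Lemma S_le_affine_of_le_on_ball (g : R * R -> R) (s t c : R) (p x : R * R) :
  Gamma_bar g -> -1 <= snd p <= 0 -> 0 <= s <= t -> t <= T ->
  (forall z, ballinf x (alpha * (t - s)) z -> g z <= flin p z + c) ->
  S s t g x <= flin p x + c + vel p * (t - s).
Proof.
  intros Hg Hp Hs Ht Hle.
  assert (HL := Gamma_bar_translate _ c (Gamma_bar_flin p Hp)).
  rewrite <- S_affine by assumption.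
  apply Rle_trans with (S s t (fun y => Rmax (g y) (flin p y + c)) x).
  - apply S_monotone; auto using Gamma_bar_max. intro z. apply Rmax_l.
  - right. apply S_eq_of_eq_on_ball; auto using Gamma_bar_max.
    intros z Hz. apply Rmax_right, Hle, Hz.
Qed.

Lemma S_ge_affine_of_ge_on_ball (g : R * R -> R) (s t c : R) (p x : R * R) :
  Gamma_bar g -> -1 <= snd p <= 0 -> 0 <= s <= t -> t <= T ->
  (forall z, ballinf x (alpha * (t - s)) z -> flin p z + c <= g z) ->
  flin p x + c + vel p * (t - s) <= S s t g x.
Proof.
  intros Hg Hp Hs Ht Hle.
  assert (HL := Gamma_bar_translate _ c (Gamma_bar_flin p Hp)).
  rewrite <- S_affine by assumption.
  apply Rle_trans with (S s t (fun y => Rmin (g y) (flin p y + c)) x).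
  - right. symmetry. apply S_eq_of_eq_on_ball; auto using Gamma_bar_min.
    intros z Hz. apply Rmin_right, Hle, Hz.
  - apply S_monotone; auto using Gamma_bar_min. intro z. apply Rmin_l.
Qed.

Variable f : R * R -> R.
Hypothesis f_Gamma_bar : Gamma_bar f.

Lemma viscosity_subsolution_at (phi : R * R -> R -> R) (x : R * R) (t delta : R) :
  Ck 1 (open_dom T) phi -> 0 < t < T -> phi x t = S 0 t f x -> 0 < delta ->
  (forall y s, open_dom T y s -> dinf x y < delta -> Rabs (s - t) < delta ->
     S 0 s f y <= phi y s) ->
  d_t phi x t <= vel (grad_x phi x t).
Proof.
  intros Hphi Ht Heq Hdelta Htouch.
  assert (Hp : -1 <= snd (grad_x phi x t) <= 0).
  { apply (slope_range_of_touch_above (fun y => phi (fst x, y) t) (fun y => S 0 t f (fst x, y))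
             (snd x) _ delta); [| exact Hdelta | |].
    - apply Derive_correct, (proj1 (proj2 Hphi) x t Ht).
    - exact (proj2 (S_Gamma_bar 0 t f ltac:(lra) ltac:(lra) f_Gamma_bar) (fst x)).
    - intros z Hz. rewrite <- surjective_pairing, Heq.
      assert (H := Htouch (fst x, z) t Ht ltac:(rewrite dinf_vertical; exact Hz)
                     ltac:(rewrite Rminus_eq_0, Rabs_R0; exact Hdelta)).
      lra. }
  apply Rle_plus_epsilon. intros eps Heps.
  destruct (backward_affine_approx T alpha delta eps phi x t Hphi Ht alpha_ge0 Hdelta Heps)
    as [h [Hh [Hhd [Hahd Happrox]]]].
  set (p := grad_x phi x t) in *. set (a := d_t phi x t) in *.
  assert (Hcmp : S (t - h) t (S 0 (t - h) f) x
                 <= flin p x + (phi x t - flin p x - a * h + eps * h) + vel p * (t - (t - h))).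
  { apply S_le_affine_of_le_on_ball; [apply S_Gamma_bar; auto; lra | exact Hp | lra | lra |].
    replace (t - (t - h)) with h by ring. intros z Hz.
    assert (Hu := Htouch z (t - h) ltac:(unfold open_dom; lra) ltac:(unfold ballinf in Hz; lra)
                   ltac:(replace (t - h - t) with (- h) by ring; rewrite Rabs_Ropp, Rabs_pos_eq; lra)).
    specialize (Happrox z Hz). apply Rabs_le_between in Happrox. lra. }
  rewrite <- S_semigroup, <- Heq in Hcmp by (auto; lra).
  replace (t - (t - h)) with h in Hcmp by ring.
  apply Rmult_le_reg_r with h; lra.
Qed.

Lemma viscosity_supersolution_at (phi : R * R -> R -> R) (x : R * R) (t delta : R) :
  Ck 1 (open_dom T) phi -> 0 < t < T -> phi x t = S 0 t f x -> 0 < delta ->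
  (forall y s, open_dom T y s -> dinf x y < delta -> Rabs (s - t) < delta ->
     phi y s <= S 0 s f y) ->
  vel (grad_x phi x t) <= d_t phi x t.
Proof.
  intros Hphi Ht Heq Hdelta Htouch.
  assert (Hp : -1 <= snd (grad_x phi x t) <= 0).
  { apply (slope_range_of_touch_below (fun y => phi (fst x, y) t) (fun y => S 0 t f (fst x, y))
             (snd x) _ delta); [| exact Hdelta | |].
    - apply Derive_correct, (proj1 (proj2 Hphi) x t Ht).
    - exact (proj2 (S_Gamma_bar 0 t f ltac:(lra) ltac:(lra) f_Gamma_bar) (fst x)).
    - intros z Hz. rewrite <- surjective_pairing, Heq.
      assert (H := Htouch (fst x, z) t Ht ltac:(rewrite dinf_vertical; exact Hz)
                     ltac:(rewrite Rminus_eq_0, Rabs_R0; exact Hdelta)).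
      lra. }
  apply Rle_plus_epsilon. intros eps Heps.
  destruct (backward_affine_approx T alpha delta eps phi x t Hphi Ht alpha_ge0 Hdelta Heps)
    as [h [Hh [Hhd [Hahd Happrox]]]].
  set (p := grad_x phi x t) in *. set (a := d_t phi x t) in *.
  assert (Hcmp : flin p x + (phi x t - flin p x - a * h - eps * h) + vel p * (t - (t - h))
                 <= S (t - h) t (S 0 (t - h) f) x).
  { apply S_ge_affine_of_ge_on_ball; [apply S_Gamma_bar; auto; lra | exact Hp | lra | lra |].
    replace (t - (t - h)) with h by ring. intros z Hz.
    assert (Hu := Htouch z (t - h) ltac:(unfold open_dom; lra) ltac:(unfold ballinf in Hz; lra)
                   ltac:(replace (t - h - t) with (- h) by ring; rewrite Rabs_Ropp, Rabs_pos_eq; lra)).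
    specialize (Happrox z Hz). apply Rabs_le_between in Happrox. lra. }
  rewrite <- S_semigroup, <- Heq in Hcmp by (auto; lra).
  replace (t - (t - h)) with h in Hcmp by ring.
  apply Rmult_le_reg_r with h; lra.
Qed.

End MonotoneScheme.

Theorem proposition3p5 (T : R)
  (S : R -> R -> (R * R -> R) -> (R * R -> R)) :
  0 < T ->
  (* S(s,t,.) maps Gamma-bar into itself *)
  (forall s t f, 0 <= s <= t -> t <= T -> Gamma_bar f -> Gamma_bar (S s t f)) ->
  (* (1) translation invariance *)
  (forall s t f c, 0 <= s <= t -> t <= T -> Gamma_bar f ->
     forall z, S s t (fun y => f y + c) z = S s t f z + c) ->
  (* (2) monotonicity *)
  (forall s t f g, 0 <= s <= t -> t <= T -> Gamma_bar f -> Gamma_bar g ->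
     (forall z, f z <= g z) -> forall z, S s t f z <= S s t g z) ->
  (* (3) locality *)
  (exists alpha, 1 < alpha /\
     forall f g s t x Rad, Gamma_bar f -> Gamma_bar g -> 0 <= s <= t -> t <= T ->
       0 <= Rad ->
       forall M,
         (forall z, ballinf x (Rad + alpha * (t - s)) z -> Rabs (f z - g z) <= M) ->
         (forall z, ballinf x Rad z -> Rabs (S s t f z - S s t g z) <= M)) ->
  (* (4) semi-group *)
  (forall r s t f, 0 <= r <= s -> s <= t <= T -> Gamma_bar f ->
     forall z, S r t f z = S s t (S r s f) z) ->
  (forall t f, 0 <= t <= T -> Gamma_bar f -> forall z, S t t f z = f z) ->
  (* (5) compatibility with linear solutions *)
  (forall rho s t, -1 <= snd rho <= 0 -> 0 <= s <= t -> t <= T ->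
     forall z, S s t (flin rho) z = flin rho z + vel rho * (t - s)) ->
  forall f, Gamma_bar f ->
    cont_on (closed_dom T) (fun x t => S 0 t f x) ->
    viscosity_solution T f (fun x t => S 0 t f x).
Proof.
  intros HT HG HTr HMon [alpha [Halpha HLoc]] HSg HId HLin f Hf Hcont.
  assert (Halpha0 : 0 <= alpha) by lra.
  split; [exact Hcont |]. split; [intro x; apply HId; [lra | exact Hf] |].
  intros phi x t Hphi Ht Heq. split; intros [delta [Hdelta Htouch]].
  - eapply (viscosity_subsolution_at T alpha S); eauto.
  - eapply (viscosity_supersolution_at T alpha S); eauto.
Qed.
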